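(* Let $\mathcal{U}$ be a subspace of $\mathbb{R}^n$. If $u\circ u$ is strictly balanced for every nonzero $u\in\mathcal{U}$, then $\mathcal{U}$ is realizable.
   Context: $u\circ u$ denotes the entrywise square of $u\in\mathbb{R}^n$. A vector $w\in\mathbb{R}^n$ is strictly balanced if $|w_i|<\sum_{j\ne i}|w_j|$ for all $i$. A correlation matrix is a positive semidefinite matrix with unit diagonal; $\mathcal{U}$ is realizable if some $n\times n$ correlation matrix has nullspace containing $\mathcal{U}$. *)

From mathcomp Require Import all_boot all_order all_algebra all_reals.
Set Implicit Arguments. Unset Strict Implicit. Unset Printing Implicit Defensive.
Import Order.TTheory GRing.Theory Num.Theory.
Local Open Scope ring_scope.

Definition hadsq (R : realType) (n : nat) (u : 'cV[R]_n) : 'cV[R]_n :=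
  \col_i (u i 0 * u i 0).

Definition strictly_balanced (R : realType) (n : nat) (w : 'cV[R]_n) : Prop :=
  forall i : 'I_n, `|w i 0| < \sum_(j < n | j != i) `|w j 0|.

Definition correlation_matrix (R : realType) (n : nat) (C : 'M[R]_n) : Prop :=
  [/\ C^T = C,
      (forall x : 'cV[R]_n, 0 <= (x^T *m C *m x) 0 0)
    & (forall i : 'I_n, C i i = 1)].

Definition realizable (R : realType) (n : nat) (U : {vspace 'cV[R]_n}) : Prop :=
  exists C : 'M[R]_n, correlation_matrix C /\
    (forall u : 'cV[R]_n, u \in U -> C *m u = 0).

From mathcomp Require Import all_boot all_order all_algebra all_reals.
From mathcomp Require Import lra.
Set Implicit Arguments.
Unset Strict Implicit.
Unset Printing Implicit Defensive.

(* Let [P] be the orthogonal projection onto [U] and [Q = 1 - P]. The column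
   [P e_i] lies in [U], and [sum_j P_ji^2 = P_ii], so the balancing hypothesis
   forces [P_ii < 1/2], i.e. [Q_ii > 1/2]. Hence the Hadamard square [H] of
   [Q] has off-diagonal row sums [Q_ii - Q_ii^2 <= 1/4 < Q_jj^2]: it is
   strictly diagonally dominant with nonnegative entries, so [H d = 1] has a
   solution [d >= 0]. Then [C = Q diag(d) Q] is positive semidefinite,
   vanishes on [U], and [C_ii = (H d)_i = 1]. *)

Import Order.TTheory GRing.Theory Num.Theory.
Local Open Scope ring_scope.

Lemma ker0_unitmx (R : fieldType) n (M : 'M[R]_n) :
  (forall x : 'cV_n, M *m x = 0 -> x = 0) -> M \in unitmx.
Proof.
move=> ker0; rewrite -unitmx_tr -row_free_unit; apply: inj_row_free => v vM0.
have /ker0 : M *m v^T = 0 by rewrite -[M]trmxK -trmx_mul vM0 trmx0.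
by move/(congr1 trmx); rewrite trmxK trmx0.
Qed.

Section DiagonalDominance.
Variables (R : realFieldType) (n : nat).

(* Levy-Desplanques: look at the coordinate of largest modulus. *)
Lemma ddom_mulmx_eq0 (M : 'M[R]_n) (x : 'cV_n) :
  (forall i, \sum_(j < n | j != i) `|M i j| < `|M i i|) ->
  M *m x = 0 -> x = 0.
Proof.
move=> dom Mx0; apply/matrixP => i j; rewrite [j]ord1 !mxE.
have [k _ kmax] := @real_arg_maxP R _ i xpredT (fun k => `|x k 0|) isT
  (fun _ _ => normr_real _).
have Mxk : M k k * x k 0 = - \sum_(j < n | j != k) M k j * x j 0.
  apply/eqP; rewrite -subr_eq0 opprK.
  by move/matrixP/(_ k 0): Mx0; rewrite !mxE (bigD1 k) //= => ->.
have bound : `|M k k| * `|x k 0| <= (\sum_(j < n | j != k) `|M k j|) * `|x k 0|.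
  rewrite -normrM Mxk normrN mulr_suml; apply: le_trans (ler_norm_sum _ _ _) _.
  apply: ler_sum => l _; rewrite normrM; apply: ler_wpM2l; [exact: normr_ge0 | exact: kmax].
have xk0 : `|x k 0| = 0.
  apply/eqP; rewrite eq_le normr_ge0 andbT leNgt; apply/negP => xk_gt0.
  by move: bound; rewrite ler_pM2r // leNgt dom.
by apply/eqP; rewrite -normr_eq0 eq_le normr_ge0 andbT -xk0; exact: kmax.
Qed.

Variable M : 'M[R]_n.
Hypothesis offdiag_ge0 : forall i j, i != j -> 0 <= M i j.
Hypothesis offdiag_sum_lt : forall i j, \sum_(l < n | l != i) M i l < M j j.

Let rowsum_ge0 i : 0 <= \sum_(l < n | l != i) M i l.
Proof. by apply: sumr_ge0 => l li; rewrite offdiag_ge0 // eq_sym. Qed.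

Lemma ddom_unitmx : M \in unitmx.
Proof.
apply: ker0_unitmx => x; apply: ddom_mulmx_eq0 => i.
rewrite ger0_norm; last exact: le_trans (rowsum_ge0 i) (ltW (offdiag_sum_lt i i)).
rewrite (eq_bigr (fun j => M i j)) => [|j ji]; first exact: offdiag_sum_lt.
by rewrite ger0_norm // offdiag_ge0 // eq_sym.
Qed.

Lemma offdiag_mul_le (d : 'cV[R]_n) i c :
  (forall j, d j 0 <= c) ->
  \sum_(j < n | j != i) M i j * d j 0 <= (\sum_(j < n | j != i) M i j) * c.
Proof.
move=> dc; rewrite mulr_suml; apply: ler_sum => j ji.
by rewrite ler_wpM2l // offdiag_ge0 // eq_sym.
Qed.

Lemma offdiag_mul_ge (d : 'cV[R]_n) i c :
  (forall j, c <= d j 0) ->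
  (\sum_(j < n | j != i) M i j) * c <= \sum_(j < n | j != i) M i j * d j 0.
Proof.
move=> cd; rewrite mulr_suml; apply: ler_sum => j ji.
by rewrite ler_wpM2l // offdiag_ge0 // eq_sym.
Qed.

(* Let [d k] be the least and [d l] the largest coordinate, and [s] the
   off-diagonal row sums. Rows [k] and [l] of [M d = 1] combine into
   [M l l - s k <= d k * (M l l * M k k - s k * s l)], where both brackets
   are positive, so [d k < 0] is impossible. *)
Lemma ddom_sol_ge0 (d : 'cV[R]_n) : M *m d = const_mx 1 -> forall i, 0 <= d i 0.
Proof.
move=> Md1 i.
have [k _ kmin] := @real_arg_minP R _ i xpredT (fun k => d k 0) isT
  (fun _ _ => num_real _).
have [l _ lmax] := @real_arg_maxP R _ i xpredT (fun k => d k 0) isT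
  (fun _ _ => num_real _).
apply: le_trans (kmin i isT); rewrite leNgt; apply/negP => dk_lt0.
have row r : 1 = M r r * d r 0 + \sum_(j < n | j != r) M r j * d j 0.
  by move/matrixP/(_ r 0): Md1; rewrite !mxE (bigD1 r).
have rowk := row k; have rowl := row l.
have lek := @offdiag_mul_le d k _ (fun j => lmax j isT).
have gel := @offdiag_mul_ge d l _ (fun j => kmin j isT).
have slk := offdiag_sum_lt k l; have skl := offdiag_sum_lt l k.
have sk0 := rowsum_ge0 k; have sl0 := rowsum_ge0 l.
set sk := \sum_(j < n | j != k) M k j in lek slk sk0.
set sl := \sum_(j < n | j != l) M l j in gel skl sl0.
have up : M l l * (1 - M k k * d k 0) <= M l l * (sk * d l 0).
  by apply: ler_wpM2l; lra.
have down : sk * (M l l * d l 0) <= sk * (1 - sl * d k 0).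
  by apply: ler_wpM2l => //; lra.
have prod : sk * sl < M l l * M k k by clear -skl slk sk0 sl0; nra.
clear -rowk rowl lek gel slk dk_lt0 up down prod; nra.
Qed.

End DiagonalDominance.

Section TrmxMulSelf.
Variables (R : realFieldType) (m : nat).

Lemma trmx_mul_self (v : 'cV[R]_m) : (v^T *m v) 0 0 = \sum_i v i 0 ^+ 2.
Proof. by rewrite mxE; apply: eq_bigr => i _; rewrite mxE expr2. Qed.

Lemma trmx_mul_self_ge0 (v : 'cV[R]_m) : 0 <= (v^T *m v) 0 0.
Proof. by rewrite trmx_mul_self sumr_ge0 // => i _; rewrite sqr_ge0. Qed.

Lemma trmx_mul_self_eq0 (v : 'cV[R]_m) : (v^T *m v) 0 0 = 0 -> v = 0.
Proof.
rewrite trmx_mul_self => /psumr_eq0P v0; apply/matrixP => i j.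
by rewrite [j]ord1 mxE; apply/eqP; rewrite -sqrf_eq0 v0 // => k _; rewrite sqr_ge0.
Qed.

End TrmxMulSelf.

Section OrthogonalProjection.
Variables (R : realFieldType) (n : nat) (U : {vspace 'cV[R]_n}).

Definition vbasis_mx : 'M[R]_(n, \dim U) :=
  \matrix_(i, j) ((vbasis U)`_j : 'cV[R]_n) i 0.

Lemma vbasis_mxE (y : 'cV_(\dim U)) :
  vbasis_mx *m y = \sum_j y j 0 *: (vbasis U)`_j.
Proof.
apply/matrixP => i c; rewrite [c]ord1 !mxE summxE.
by apply: eq_bigr => j _; rewrite !mxE mulrC.
Qed.

Lemma vbasis_mx_mem (y : 'cV_(\dim U)) : vbasis_mx *m y \in U.
Proof.
rewrite vbasis_mxE; apply: rpred_sum => j _; apply/rpredZ/vbasis_mem.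
by rewrite mem_nth ?size_tuple.
Qed.

Lemma vbasis_mxP u : u \in U -> exists y, u = vbasis_mx *m y.
Proof.
move=> Uu; exists (\col_j coord (vbasis U) j u).
by rewrite vbasis_mxE {1}(coord_vbasis Uu); apply: eq_bigr => j _; rewrite mxE.
Qed.

Lemma vbasis_mx_eq0 (y : 'cV_(\dim U)) : vbasis_mx *m y = 0 -> y = 0.
Proof.
rewrite vbasis_mxE => /(freeP (basis_free (vbasisP U))) y0.
by apply/matrixP => i c; rewrite [c]ord1 y0 mxE.
Qed.

Definition gram_mx := vbasis_mx^T *m vbasis_mx.

Lemma gram_mx_unit : gram_mx \in unitmx.
Proof.
apply: ker0_unitmx => y Gy0; apply/vbasis_mx_eq0/trmx_mul_self_eq0.
by rewrite trmx_mul -mulmxA (mulmxA vbasis_mx^T) -/gram_mx Gy0 !mulmx0 mxE.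
Qed.

Definition oproj := vbasis_mx *m invmx gram_mx *m vbasis_mx^T.

Lemma oproj_sym : oproj^T = oproj.
Proof.
have gram_sym : gram_mx^T = gram_mx by rewrite trmx_mul trmxK.
by rewrite !trmx_mul trmxK trmx_inv gram_sym mulmxA.
Qed.

Lemma oproj_vbasis_mx : oproj *m vbasis_mx = vbasis_mx.
Proof. by rewrite -!mulmxA -/gram_mx mulVmx ?gram_mx_unit // mulmx1. Qed.

Lemma oproj_idem : oproj *m oproj = oproj.
Proof.
have BP : vbasis_mx^T *m oproj = vbasis_mx^T.
  by rewrite -{1}oproj_sym -trmx_mul oproj_vbasis_mx.
by rewrite {1}/oproj -mulmxA BP.
Qed.

Lemma oproj_mem (x : 'cV_n) : oproj *m x \in U.
Proof. by rewrite -!mulmxA vbasis_mx_mem. Qed.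

Lemma oproj_id u : u \in U -> oproj *m u = u.
Proof. by case/vbasis_mxP => y ->; rewrite mulmxA oproj_vbasis_mx. Qed.

Definition coproj := 1%:M - oproj.

Lemma coproj_sym : coproj^T = coproj.
Proof. by rewrite linearB /= oproj_sym trmx1. Qed.

Lemma coproj_idem : coproj *m coproj = coproj.
Proof. by rewrite mulmxBl !mulmxBr !mul1mx mulmx1 oproj_idem subrr subr0. Qed.

Lemma coproj_mem u : u \in U -> coproj *m u = 0.
Proof. by move=> Uu; rewrite mulmxBl mul1mx oproj_id ?subrr. Qed.

End OrthogonalProjection.

Lemma sym_idem_sum_sqr (R : comPzRingType) n (M : 'M[R]_n) i :
  M^T = M -> M *m M = M -> \sum_j M j i ^+ 2 = M i i.
Proof.
move=> Msym Midem; rewrite -[in RHS]Midem mxE; apply: eq_bigr => j _.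
by rewrite -[in M i j]Msym mxE expr2.
Qed.

Lemma sym_idem_diag_lt_half (R : realType) n (P : 'M[R]_n) i :
  P^T = P -> P *m P = P ->
  (col i P != 0 -> strictly_balanced (hadsq (col i P))) -> P i i < 1/2.
Proof.
move=> Psym Pidem bal; case: (eqVneq (col i P) 0) => [Pi0|/bal/(_ i)].
  by move/matrixP/(_ i 0): Pi0; rewrite !mxE => ->; lra.
rewrite /hadsq !mxE -expr2 ger0_norm ?sqr_ge0 //.
rewrite (eq_bigr (fun j => P j i ^+ 2)) => [|j _]; last first.
  by rewrite !mxE -expr2 ger0_norm ?sqr_ge0.
have := sym_idem_sum_sqr i Psym Pidem; rewrite (bigD1 i) //=.
by move: (\sum_(j < n | j != i) _) => s; rewrite expr2; nra.
Qed.

Lemma coproj_diag_gt_half (R : realType) n (U : {vspace 'cV[R]_n}) :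
  (forall u : 'cV[R]_n, u \in U -> u != 0 -> strictly_balanced (hadsq u)) ->
  forall i, 1/2 < coproj U i i.
Proof.
move=> bal i; have -> : coproj U i i = 1 - oproj U i i by rewrite !mxE eqxx.
suff : oproj U i i < 1/2 by lra.
apply: sym_idem_diag_lt_half (oproj_sym U) (oproj_idem U) _.
by rewrite colE; apply/bal/oproj_mem.
Qed.

(* The off-diagonal row sums of [Q o Q] equal [Q i i - Q i i ^+ 2 <= 1/4]. *)
Lemma sym_idem_hadsq_dominant (R : realFieldType) n (Q : 'M[R]_n) :
  Q^T = Q -> Q *m Q = Q -> (forall i, 1/2 < Q i i) ->
  forall i j, \sum_(l < n | l != i) Q i l ^+ 2 < Q j j ^+ 2.
Proof.
move=> Qsym Qidem Qdiag i j.
have := sym_idem_sum_sqr i Qsym Qidem; rewrite (bigD1 i) //=.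
rewrite (eq_bigr (fun l => Q i l ^+ 2)) => [|l _]; last by rewrite -[in Q l i]Qsym mxE.
move: (\sum_(l < n | l != i) _) (Qdiag i) (Qdiag j) => s Qi Qj; rewrite !expr2.
nra.
Qed.

Lemma gram_correlation (R : realType) m n (A : 'M[R]_(m, n)) :
  (forall i, \sum_k A k i ^+ 2 = 1) -> correlation_matrix (A^T *m A).
Proof.
move=> unit_cols; split=> [||i].
- by rewrite trmx_mul trmxK.
- by move=> x; rewrite mulmxA -mulmxA -trmx_mul trmx_mul_self_ge0.
- by rewrite -(unit_cols i) mxE; apply: eq_bigr => k _; rewrite mxE expr2.
Qed.

Theorem corollary4p5 (R : realType) (n : nat) (U : {vspace 'cV[R]_n}) :
  (forall u : 'cV[R]_n, u \in U -> u != 0 -> strictly_balanced (hadsq u)) ->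
  realizable U.
Proof.
move=> bal; set Q := coproj U.
have Qsym : Q^T = Q := coproj_sym U.
pose H := map_mx (fun x => x ^+ 2) Q.
have H_offdiag_ge0 i j : i != j -> 0 <= H i j by rewrite mxE sqr_ge0.
have H_dominant i j : \sum_(l < n | l != i) H i l < H j j.
  rewrite mxE (eq_bigr (fun l => Q i l ^+ 2)) => [|l _]; last by rewrite mxE.
  apply: (sym_idem_hadsq_dominant Qsym); [exact: coproj_idem | exact: coproj_diag_gt_half].
pose d : 'cV_n := invmx H *m const_mx 1.
have H_unit := ddom_unitmx H_offdiag_ge0 H_dominant.
have Hd : H *m d = const_mx 1 by rewrite mulmxA mulmxV ?mul1mx.
have d_ge0 := ddom_sol_ge0 H_offdiag_ge0 H_dominant Hd.
pose A := diag_mx (\row_k Num.sqrt (d k 0)) *m Q.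
exists (A^T *m A); split.
- apply: gram_correlation => i; move/matrixP/(_ i 0): Hd; rewrite !mxE => <-.
  apply: eq_bigr => k _; rewrite /A mul_diag_mx mxE [(\row__ _) 0 k]mxE [H i k]mxE.
  by rewrite exprMn sqr_sqrtr ?d_ge0 // -[in Q k i]Qsym [Q^T k i]mxE mulrC.
- by move=> u Uu; rewrite -!mulmxA coproj_mem ?mulmx0.
Qed.
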